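(* Let $X$ be a linearly ordered set and let $\mathrm{BiComDer}\langle X,d\rangle$ be the free $\mathrm{BiCom}$-algebra with one derivation $d$ generated by $X$ (identified with $\mathrm{BiCom}\langle d^\omega X\rangle$, $d^\omega X=\{d^s(x)\mid s\ge0,x\in X\}$). Let $\mathrm{SGD}^!\langle X\rangle$ be the subalgebra of $\mathrm{BiComDer}\langle X,d\rangle$ generated by $X$ with respect to the operations $*$ and $u\star v=d(u)\odot v$. Then an element $f\in\mathrm{BiComDer}\langle X,d\rangle$ belongs to $\mathrm{SGD}^!\langle X\rangle$ if and only if, when $f$ is written in the basis of monomials of $\mathrm{BiCom}\langle d^\omega X\rangle$, all monomials occurring in $f$ have weight $-1$.
   Context: A $\mathrm{BiCom}$-algebra is a vector space with two bilinear operations $*$ and $\odot$, each associative and commutative, satisfying $(x\odot y)*z=x\odot(y*z)$; a derivation of it is a linear map that is a derivation for both operations. The weight of monomials in $\mathrm{BiComDer}\langle X,d\rangle$ is defined inductively by $\mathrm{wt}(x)=-1$ for $x\in X$, $\mathrm{wt}(d(u))=\mathrm{wt}(u)+1$, $\mathrm{wt}(u*v)=\mathrm{wt}(u)+\mathrm{wt}(v)+1$, $\mathrm{wt}(u\odot v)=\mathrm{wt}(u)+\mathrm{wt}(v)$ (this is well defined on the basis monomials $x_1*\dots*x_t*(y_1\odot\dots\odot y_k)$, $x_i,y_j\in d^\omega X$). *)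

From HB Require Import structures.
From mathcomp Require Import all_boot all_order all_algebra.
Set Implicit Arguments. Unset Strict Implicit. Unset Printing Implicit Defensive.
Import Order.TTheory GRing.Theory Num.Theory.
Local Open Scope ring_scope.

(* A generator d^s(x) of d^omega X is encoded as the pair (s, x).
   A basis monomial x_1*...*x_t*(y_1 (.) ... (.) y_k) of the free BiCom-algebra
   (t >= 0, k >= 1) is encoded as (M, t) where M is the multiset
   {x_1,...,x_t,y_1,...,y_k} (a sequence considered up to permutation) and
   t is the number of *-products; validity: 0 <= t < size M.
   In the free BiCom-algebra the monomial depends only on M and t
   (the identity (a(.)b)*c = a(.)(b*c) together with commutativity lets any
   factor be moved between the *-part and the (.)-part), so these pairs
   (modulo permutation of M) form the monomial basis. *)
Section BiCom.
Variables (disp : Order.disp_t) (X : orderType disp) (K : fieldType).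

Definition gen := (nat * X)%type.
Definition mon := (seq gen * nat)%type.

Definition mon_valid (m : mon) : bool := (0 < size m.1)%N && (m.2 < size m.1)%N.

Definition mon_eq (m n : mon) : bool := perm_eq m.1 n.1 && (m.2 == n.2).

Definition wt (m : mon) : int :=
  (\sum_(g <- m.1) ((g.1)%:Z - 1)) + (m.2)%:Z.

Definition mon_star (m n : mon) : mon := (m.1 ++ n.1, (m.2 + n.2).+1)%N.
Definition mon_odot (m n : mon) : mon := (m.1 ++ n.1, (m.2 + n.2)%N).

(* derivation of a monomial: Leibniz rule for both products, d(d^s x) = d^(s+1) x;
   d(m) = sum over the factors of m of m with that factor differentiated *)
Fixpoint der_seq (s : seq gen) : seq (seq gen) :=
  match s with
  | [::] => [::]
  | g :: s' => ((g.1.+1, g.2) :: s') :: [seq g :: r | r <- der_seq s']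
  end.
Definition mon_der (m : mon) : seq mon := [seq (r, m.2) | r <- der_seq m.1].

Definition elt := seq (K * mon).

Definition coef (f : elt) (m : mon) : K := \sum_(p <- f | mon_eq p.2 m) p.1.

Definition elt_gen (x : X) : elt := [:: (1, ([:: (0%N, x)], 0%N))].
Definition elt_add (f g : elt) : elt := f ++ g.
Definition elt_scale (a : K) (f : elt) : elt := [seq (a * p.1, p.2) | p <- f].
Definition elt_star (f g : elt) : elt :=
  [seq (p.1 * q.1, mon_star p.2 q.2) | p <- f, q <- g].
Definition elt_odot (f g : elt) : elt :=
  [seq (p.1 * q.1, mon_odot p.2 q.2) | p <- f, q <- g].
Definition elt_der (f : elt) : elt :=
  flatten [seq [seq (p.1, m) | m <- mon_der p.2] | p <- f].
Definition elt_sgd (f g : elt) : elt := elt_odot (elt_der f) g.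

(* SGD^!<X>: the subalgebra generated by X w.r.t. * and \star, i.e. the least
   subspace containing X and closed under * and \star (membership is
   invariant under equality of elements, i.e. equality of all coefficients). *)
Inductive in_SGD : elt -> Prop :=
  | SGD_gen x : in_SGD (elt_gen x)
  | SGD_zero : in_SGD [::]
  | SGD_add f g : in_SGD f -> in_SGD g -> in_SGD (elt_add f g)
  | SGD_scale a f : in_SGD f -> in_SGD (elt_scale a f)
  | SGD_star f g : in_SGD f -> in_SGD g -> in_SGD (elt_star f g)
  | SGD_sgd f g : in_SGD f -> in_SGD g -> in_SGD (elt_sgd f g)
  | SGD_ext f g : in_SGD f -> (forall m, coef f m = coef g m) -> in_SGD g.

End BiCom.

From HB Require Import structures.
From mathcomp Require Import all_boot all_order all_algebra.
From mathcomp Require Import zify.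
Set Implicit Arguments. Unset Strict Implicit. Unset Printing Implicit Defensive.
Import Order.TTheory GRing.Theory Num.Theory.
Local Open Scope ring_scope.

(* Generators x have weight -1; u * v adds the weights plus one,
   d adds one and (.) adds the weights, so * and u \star v = d(u) (.) v both
   send weight -1 to weight -1.  Since elements are formal lists of terms,
   "f has only weight w monomials" is phrased through coefficients
   (homogeneous w f); coefficients of products and derivatives are values of
   mon_eq-invariant linear functionals (linext), and such functionals only
   depend on the coefficients of their argument (linext_coef0).  The one
   non-obvious invariance is that d is well defined on basis monomials,
   i.e. the Leibniz expansion commutes with permuting factors.

   Every weight -1 monomial is generated, by induction on the
   number of factors: with a *-product present it is y * (smaller monomial)
   for an undifferentiated factor y; otherwise it is d^(k+1) x (.) C, which
   is x \star C for k = 0 and, for k > 0, is (d^k x (.) D) \star z minus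
   terms handled by induction on k.  A general f of weight -1 agrees
   coefficientwise with a linear combination of such monomials. *)

Section WeightCharacterisation.
Variables (disp : Order.disp_t) (X : orderType disp) (K : fieldType).
Local Notation gen := (gen X).
Local Notation mon := (mon X).
Local Notation elt := (elt X K).

Definition deg (s : seq gen) : nat := (\sum_(g <- s) g.1)%N.

Lemma deg_cons g s : deg (g :: s) = (g.1 + deg s)%N.
Proof. by rewrite /deg big_cons. Qed.

Lemma deg_cat s t : deg (s ++ t) = (deg s + deg t)%N.
Proof. by rewrite /deg big_cat. Qed.

Lemma deg_perm s t : perm_eq s t -> deg s = deg t.
Proof. by move=> st; rewrite /deg (perm_big _ st). Qed.

Lemma wtE (m : mon) : wt m = (deg m.1)%:Z - (size m.1)%:Z + (m.2)%:Z.
Proof.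
case: m => s t; rewrite /wt /=.
suff -> : \sum_(g <- s) ((g.1)%:Z - 1) = (deg s)%:Z - (size s)%:Z by [].
elim: s => [|g s IH]; first by rewrite big_nil /deg big_nil.
rewrite big_cons IH deg_cons /=; lia.
Qed.

Lemma wt_eqN1 (m : mon) : (wt m = -1) <-> (deg m.1 + m.2).+1 = size m.1.
Proof. by rewrite wtE; split; lia. Qed.

Lemma wt_star (a b : mon) : wt (mon_star a b) = wt a + wt b + 1.
Proof. rewrite !wtE /= deg_cat size_cat; lia. Qed.

Lemma wt_odot (a b : mon) : wt (mon_odot a b) = wt a + wt b.
Proof. rewrite !wtE /= deg_cat size_cat; lia. Qed.

Lemma der_seq_deg s r : r \in der_seq s -> deg r = (deg s).+1 /\ size r = size s.
Proof.
elim: s r => [//|g s IH] r /=; rewrite in_cons => /orP[/eqP -> | ].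
  by rewrite !deg_cons.
by case/mapP => r' /IH [dr sr] ->; rewrite !deg_cons /= dr sr addnS.
Qed.

Lemma wt_der (a r : mon) : r \in mon_der a -> wt r = wt a + 1.
Proof. by case/mapP => r' /der_seq_deg [dr sr] ->; rewrite !wtE /= dr sr; lia. Qed.

Lemma mon_eq_refl (a : mon) : mon_eq a a.
Proof. by rewrite /mon_eq perm_refl eqxx. Qed.

Lemma mon_eq_sym (a b : mon) : mon_eq a b = mon_eq b a.
Proof. by rewrite /mon_eq perm_sym eq_sym. Qed.

Lemma mon_eq_trans (a b c : mon) : mon_eq a b -> mon_eq b c -> mon_eq a c.
Proof.
rewrite /mon_eq => /andP[ab /eqP ->] /andP[bc /eqP ->].
by rewrite (perm_trans ab bc) eqxx.
Qed.

Lemma mon_eq_trans_l (a b c : mon) : mon_eq a b -> mon_eq a c = mon_eq b c.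
Proof.
move=> ab; apply/idP/idP; last exact: mon_eq_trans.
by apply: mon_eq_trans; rewrite mon_eq_sym.
Qed.

Lemma mon_eq_wt (a b : mon) : mon_eq a b -> wt a = wt b.
Proof.
by case/andP => ab /eqP e; rewrite !wtE e (perm_size ab) (deg_perm ab).
Qed.

Lemma mon_eq_star (a a' b b' : mon) :
  mon_eq a a' -> mon_eq b b' -> mon_eq (mon_star a b) (mon_star a' b').
Proof.
by case/andP => aa' /eqP ea /andP[bb' /eqP eb]; rewrite /mon_eq /= perm_cat // ea eb eqxx.
Qed.

Lemma mon_eq_odot (a a' b b' : mon) :
  mon_eq a a' -> mon_eq b b' -> mon_eq (mon_odot a b) (mon_odot a' b').
Proof.
by case/andP => aa' /eqP ea /andP[bb' /eqP eb]; rewrite /mon_eq /= perm_cat // ea eb eqxx.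
Qed.

(* Evaluation at f of the linear extension of a function phi on monomials;
   coefficients, and the coefficients of products, are of this form. *)
Definition linext (f : elt) (phi : mon -> K) : K := \sum_(p <- f) p.1 * phi p.2.

Definition mon_invariant (T : Type) (phi : mon -> T) :=
  forall a b, mon_eq a b -> phi a = phi b.

Lemma coefE (f : elt) m : coef f m = linext f (fun a => (mon_eq a m)%:R).
Proof.
rewrite /coef /linext big_mkcond; apply: eq_bigr => p _.
by case: ifP; rewrite ?mulr1 ?mulr0.
Qed.

Lemma coef_nil m : coef ([::] : elt) m = 0.
Proof. by rewrite /coef big_nil. Qed.

Lemma coef1 (c : K) (a : mon) m : coef [:: (c, a)] m = if mon_eq a m then c else 0.
Proof. by rewrite /coef big_cons big_nil /=; case: ifP; rewrite ?addr0. Qed.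

Lemma coef_cat (f g : elt) m : coef (f ++ g) m = coef f m + coef g m.
Proof. by rewrite /coef big_cat. Qed.

Lemma coef_scale a (f : elt) m : coef (elt_scale a f) m = a * coef f m.
Proof. by rewrite /coef big_map big_distrr. Qed.

Lemma coef_allpairs (op : mon -> mon -> mon) (f g : elt) m :
  coef [seq (p.1 * q.1, op p.2 q.2) | p <- f, q <- g] m =
  linext f (fun a => linext g (fun b => (mon_eq (op a b) m)%:R)).
Proof.
rewrite coefE /linext big_allpairs_dep /=; apply: eq_bigr => p _.
by rewrite big_distrr; apply: eq_bigr => q _; rewrite /= mulrA.
Qed.

Lemma coef_der (f : elt) m :
  coef (elt_der f) m =
  linext f (fun a => (count (fun r => mon_eq r m) (mon_der a))%:R).
Proof.
rewrite coefE /linext /elt_der big_flatten big_map; apply: eq_bigr => p _.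
rewrite big_map /= -big_distrr /=; congr (_ * _).
by elim: (mon_der p.2) => [|r s IH]; rewrite ?big_nil // big_cons IH natrD.
Qed.

Lemma coef_filter (Q : pred mon) (f : elt) m : mon_invariant Q ->
  coef [seq p <- f | Q p.2] m = if Q m then coef f m else 0.
Proof.
move=> Qinv; rewrite /coef big_filter_cond; case: ifP => Qm.
  apply: eq_bigl => p; case: (boolP (mon_eq p.2 m)) => pm; last by rewrite andbF.
  by rewrite (Qinv _ _ pm) Qm.
by apply: big1 => p /andP[Qp pm]; rewrite (Qinv _ _ pm) Qm in Qp.
Qed.

Lemma linext_split (f : elt) phi a : mon_invariant phi ->
  linext f phi = coef f a * phi a + linext [seq p <- f | ~~ mon_eq p.2 a] phi.
Proof.
move=> phi_inv; rewrite /linext big_filter (bigID (fun p => mon_eq p.2 a)) /=.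
congr (_ + _); rewrite /coef big_distrl /=.
by apply: eq_bigr => p /phi_inv ->.
Qed.

Lemma linext_coef0 (f : elt) phi : mon_invariant phi ->
  (forall m, coef f m = 0) -> linext f phi = 0.
Proof.
move=> phi_inv; elim: {f}_.+1 {-2}f (ltnSn (size f)) => // n IH [|p f] f_size f0.
  by rewrite /linext big_nil.
rewrite (linext_split _ p.2 phi_inv) f0 mul0r add0r IH //.
  rewrite /= mon_eq_refl /= ltnS in f_size *; rewrite size_filter.
  exact: leq_ltn_trans (count_size _ _) f_size.
move=> m; rewrite (@coef_filter (fun a => ~~ mon_eq a p.2)); first by case: ifP.
by move=> a b ab; rewrite (mon_eq_trans_l _ ab).
Qed.

(* The derivation is well defined on basis monomials: permuting the factors
   of a monomial permutes the terms of its Leibniz expansion (up to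
   permutation inside each term).  We count terms satisfying a
   permutation-invariant predicate, which is all that coefficients see. *)
Definition perm_invariant (P : pred (seq gen)) :=
  forall s t, perm_eq s t -> P s = P t.

Lemma perm_invariant_cons P g :
  perm_invariant P -> perm_invariant (fun r => P (g :: r)).
Proof. by move=> Pinv s t st; apply: Pinv; rewrite perm_cons. Qed.

Lemma perm_swap2 (u v : gen) w : perm_eq (u :: v :: w) (v :: u :: w).
Proof. exact/permPl/(perm_catCA [:: u] [:: v] w). Qed.

Lemma perm_mid (a : seq gen) x b : perm_eq (a ++ x :: b) (x :: a ++ b).
Proof. exact/permPl/(perm_catCA a [:: x] b). Qed.

Lemma count_der_seq_mid a x b P : perm_invariant P ->
  count P (der_seq (a ++ x :: b)) = count P (der_seq (x :: a ++ b)).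
Proof.
elim: a P => [//|y a IH] P Pinv; rewrite /= !count_map.
rewrite (IH _ (perm_invariant_cons y Pinv)) /= count_map /preim /=.
have -> : P ((y.1.+1, y.2) :: a ++ x :: b) = P (x :: (y.1.+1, y.2) :: a ++ b).
  by apply: Pinv; rewrite (perm_trans _ (perm_swap2 _ _ _)) // perm_cons perm_mid.
have -> : P (y :: (x.1.+1, x.2) :: a ++ b) = P ((x.1.+1, x.2) :: y :: a ++ b).
  exact/Pinv/perm_swap2.
have -> : count (fun r => P (y :: x :: r)) (der_seq (a ++ b)) =
          count (fun r => P (x :: y :: r)) (der_seq (a ++ b)).
  by apply: eq_count => r; apply/Pinv/perm_swap2.
by rewrite addnCA.
Qed.

Lemma count_der_seq_perm s t P : perm_invariant P -> perm_eq s t ->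
  count P (der_seq s) = count P (der_seq t).
Proof.
elim: s t P => [|x s IH] t P Pinv st; first by case: t st => // ? ? /perm_size.
have xt : x \in t by rewrite -(perm_mem st) mem_head.
move: st; case/splitPr: xt => t1 t2 st; rewrite count_der_seq_mid //= !count_map.
have st' : perm_eq s (t1 ++ t2) by rewrite -(perm_cons x) (perm_trans st) ?perm_mid.
congr (_ + _)%N; first by congr (nat_of_bool _); apply: Pinv; rewrite perm_cons.
exact: (IH _ _ (perm_invariant_cons x Pinv)).
Qed.

Lemma count_mon_der_eq (a a' m : mon) : mon_eq a a' ->
  count (fun r => mon_eq r m) (mon_der a) = count (fun r => mon_eq r m) (mon_der a').
Proof.
case/andP => aa' /eqP e; rewrite /mon_der !count_map e.
by apply: count_der_seq_perm aa' => s t st; rewrite /preim /mon_eq /= (permPl st).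
Qed.

Definition homogeneous (w : int) (f : elt) := forall m, wt m != w -> coef f m = 0.

Lemma linext_homogeneous w (f : elt) phi : homogeneous w f -> mon_invariant phi ->
  (forall a, wt a = w -> phi a = 0) -> linext f phi = 0.
Proof.
move=> fw phi_inv phi0; rewrite /linext (bigID (fun p => wt p.2 == w)) /=.
rewrite big1 ?add0r => [|p /eqP /phi0 ->]; last by rewrite mulr0.
rewrite -big_filter; apply: linext_coef0 => // m.
rewrite (@coef_filter (fun a => wt a != w)) => [|a b /mon_eq_wt ->] //.
by case: ifP => // /fw.
Qed.

Lemma homogeneous_allpairs (op : mon -> mon -> mon) (c u v : int) (f g : elt) :
  (forall a b, wt (op a b) = wt a + wt b + c) ->
  (forall a a' b b', mon_eq a a' -> mon_eq b b' -> mon_eq (op a b) (op a' b')) ->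
  homogeneous u f -> homogeneous v g ->
  homogeneous (u + v + c) [seq (p.1 * q.1, op p.2 q.2) | p <- f, q <- g].
Proof.
move=> wt_op op_eq fu gv m wm; rewrite coef_allpairs.
apply: (linext_homogeneous fu) => [a a' aa'|a wa].
  apply: eq_bigr => q _.
  by rewrite (mon_eq_trans_l _ (op_eq _ _ _ _ aa' (mon_eq_refl q.2))).
apply: (linext_homogeneous gv) => [b b' bb'|b wb].
  by rewrite (mon_eq_trans_l _ (op_eq _ _ _ _ (mon_eq_refl a) bb')).
suff -> : mon_eq (op a b) m = false by [].
by apply: contraNF wm => /mon_eq_wt <-; rewrite wt_op wa wb.
Qed.

Lemma homogeneous_der w (f : elt) : homogeneous w f -> homogeneous (w + 1) (elt_der f).
Proof.
move=> fw m wm; rewrite coef_der.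
apply: (linext_homogeneous fw) => [a a' /count_mon_der_eq -> //|a wa].
rewrite (@eq_in_count _ _ pred0) ?count_pred0 // => r /wt_der wr /=.
by apply: contraNF wm => /mon_eq_wt <-; rewrite wr wa.
Qed.

Lemma SGD_homogeneous (f : elt) : in_SGD f -> homogeneous (-1) f.
Proof.
elim=> {f} [x||f g _ fw _ gw|a f _ fw|f g _ fw _ gw|f g _ fw _ gw|f g _ fw fg] m wm.
- rewrite coef1; case: ifP => // /mon_eq_wt wxm.
  by rewrite -wxm wtE /= deg_cons /deg big_nil in wm.
- by rewrite coef_nil.
- by rewrite coef_cat fw // gw // addr0.
- by rewrite coef_scale fw // mulr0.
- exact: (homogeneous_allpairs wt_star mon_eq_star fw gw).
- have sgd_w : homogeneous (-1 + 1 + -1 + 0) (elt_sgd f g).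
    apply: homogeneous_allpairs mon_eq_odot (homogeneous_der fw) gw => a b.
    by rewrite wt_odot addr0.
  exact: sgd_w.
- by rewrite -fg fw.
Qed.

Definition monom (m : mon) : elt := [:: (1, m)].

Lemma SGD_mon_eq (a b : mon) : mon_eq a b -> in_SGD (monom a) -> in_SGD (monom b).
Proof.
move=> ab Ha; apply: (SGD_ext Ha) => m.
by rewrite !coef1 (mon_eq_trans_l _ ab).
Qed.

Lemma SGD_all (l : elt) : (forall p, p \in l -> in_SGD [:: p]) -> in_SGD l.
Proof.
elim: l => [|p l IH] lS; first exact: SGD_zero.
apply: (@SGD_add _ _ _ [:: p]); first by apply: lS; rewrite mem_head.
by apply: IH => q ql; apply: lS; rewrite in_cons ql orbT.
Qed.

Lemma SGD_sub_head p (l : elt) : in_SGD (p :: l) -> in_SGD l -> in_SGD [:: p].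
Proof.
move=> pl l_in; apply: (SGD_ext (SGD_add pl (SGD_scale (-1) l_in))) => m.
by rewrite /elt_add cat_cons -cat1s !coef_cat coef_scale mulN1r subrr addr0.
Qed.

Lemma star_gen_monom y C t :
  elt_star (elt_gen K y) (monom (C, t)) = monom ((0%N, y) :: C, t.+1).
Proof. by rewrite /elt_star /= mulr1. Qed.

Lemma sgd_gen_monom y C :
  elt_sgd (elt_gen K y) (monom (C, 0%N)) = monom ((1%N, y) :: C, 0%N).
Proof. by rewrite /elt_sgd /elt_odot /elt_der /= mulr1. Qed.

Lemma sgd_monom_gen (a : seq gen) y :
  elt_sgd (monom (a, 0%N)) (elt_gen K y) =
  [seq (1, (r ++ [:: (0%N, y)], 0%N)) | r <- der_seq a].
Proof.
rewrite /elt_sgd /elt_odot /elt_der /= cats0 flatten_map1 /mon_der -!map_comp.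
by apply: eq_map => r /=; rewrite mulr1.
Qed.

Lemma has_order0 (s : seq gen) : (deg s < size s)%N -> exists y, (0%N, y) \in s.
Proof.
elim: s => [//|[[|k] y] s IH] /=; rewrite deg_cons /=; first by exists y; rewrite mem_head.
by move=> ws; have [|z zs] := IH; [lia | exists z; rewrite in_cons zs orbT].
Qed.

Lemma has_pos_order (s : seq gen) : (0 < deg s)%N -> exists k y, (k.+1, y) \in s.
Proof.
elim: s => [|[[|k] y] s IH]; [by rewrite /deg big_nil | | by exists k, y; rewrite mem_head].
rewrite deg_cons => /IH [k [z zs]].
by exists k, z; rewrite in_cons zs orbT.
Qed.

Lemma perm_remove (g : gen) (s : seq gen) : g \in s -> exists D : seq gen,
  [/\ perm_eq s (g :: D), deg s = (g.1 + deg D)%N & size s = (size D).+1].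
Proof.
move=> /perm_to_rem ps; exists (rem g s).
by rewrite (deg_perm ps) deg_cons (perm_size ps).
Qed.

Section GenerationStep.
Variable n : nat.
Hypothesis IH : forall s t, (size s < n)%N -> (deg s + t).+1 = size s ->
  in_SGD (monom (s, t)).

(* With a *-product present, some factor is an undifferentiated y, and the
   monomial is y * (rest). *)
Lemma SGD_star_step s t : (size s <= n)%N -> (deg s + t.+1).+1 = size s ->
  in_SGD (monom (s, t.+1)).
Proof.
move=> sn ws; have [|y ys] := @has_order0 s; first lia.
have [D [ps ds ss]] := perm_remove ys.
apply: (@SGD_mon_eq ((0%N, y) :: D, t.+1)); first by rewrite /mon_eq /= perm_sym ps eqxx.
rewrite -star_gen_monom; apply: SGD_star (SGD_gen K y) (IH _ _);
  rewrite /= in ds; lia.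
Qed.

(* d^(k+1) x (.) C, for C of weight -1 - k: for k = 0 it is x \star C; for
   larger k, (d^k x (.) D) \star z = d^(k+1) x (.) D (.) z plus monomials
   d^k x (.) d(D) (.) z, which are generated by induction on k. *)
Lemma SGD_lead_der k x C : (size C < n)%N -> (k.+1 + deg C)%N = size C ->
  in_SGD (monom ((k.+1, x) :: C, 0%N)).
Proof.
elim: k x C => [|k IHk] x C Cn wC.
  by rewrite -sgd_gen_monom; apply: SGD_sgd (SGD_gen K x) (IH _ _); lia.
have [|z zC] := @has_order0 C; first lia.
have [D [pC dC sC]] := perm_remove zC; rewrite /= in dC.
have lowD : in_SGD (monom ((k.+1, x) :: D, 0%N)) by apply: IH; rewrite ?deg_cons /=; lia.
have expand := SGD_sgd lowD (SGD_gen K z); rewrite sgd_monom_gen /= in expand.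
have rest : in_SGD [seq ((1 : K), (r ++ [:: (0%N, z)], 0%N))
                   | r <- [seq (k.+1, x) :: r' | r' <- der_seq D]].
  apply: SGD_all => _ /mapP [_ /mapP [r rD ->] ->].
  have [dr sr] := der_seq_deg rD.
  have dz : deg [:: (0%N, z)] = 0%N by rewrite /deg big_seq1.
  by apply: IHk; rewrite size_cat sr ?deg_cat ?dz ?dr /=; lia.
apply: SGD_mon_eq (SGD_sub_head expand rest).
by rewrite /mon_eq eqxx andbT /= perm_cons cats1 perm_rcons perm_sym.
Qed.

(* Without *-products: either a single generator x, or some factor is
   differentiated and the previous lemma applies. *)
Lemma SGD_odot_step s : (size s <= n)%N -> (deg s).+1 = size s ->
  in_SGD (monom (s, 0%N)).
Proof.
move=> sn ws; have [s1|s_gt1] : size s = 1%N \/ (1 < size s)%N by lia.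
  case: s s1 ws {sn} => [|[k y] [|]] //= _; rewrite deg_cons /deg big_nil /= => ws.
  have -> : k = 0%N by lia.
  exact: SGD_gen.
have [|k [x xs]] := @has_pos_order s; first lia.
have [D [ps ds ss]] := perm_remove xs.
apply: (@SGD_mon_eq ((k.+1, x) :: D, 0%N)); first by rewrite /mon_eq /= perm_sym ps eqxx.
rewrite /= in ds; apply: SGD_lead_der; lia.
Qed.

End GenerationStep.

Lemma SGD_weightN1_monom s t : (deg s + t).+1 = size s -> in_SGD (monom (s, t)).
Proof.
elim: {s}_.+1 {-2}s t (ltnSn (size s)) => // n IH s [|t]; rewrite ltnS => sn ws.
  by rewrite addn0 in ws; exact: (@SGD_odot_step n IH s).
exact: (@SGD_star_step n IH s t).
Qed.

(* Sufficiency: f agrees coefficientwise with the sum of its weight -1 terms,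
   each of which is a multiple of a generated monomial. *)
Lemma SGD_of_weightN1 (f : elt) :
  (forall m, coef f m != 0 -> wt m = -1) -> in_SGD f.
Proof.
move=> fw; have filt : in_SGD [seq p <- f | wt p.2 == -1].
  apply: SGD_all => p; rewrite mem_filter => /andP[/eqP /wt_eqN1 wp _].
  have := SGD_scale p.1 (SGD_weightN1_monom wp).
  by rewrite /elt_scale /= mulr1 -!surjective_pairing.
apply: (SGD_ext filt) => m.
rewrite (@coef_filter (fun a => wt a == -1)) => [|a b /mon_eq_wt ->] //.
by case: eqP => // wm; apply/esym/eqP/contraT => /fw.
Qed.

End WeightCharacterisation.

Theorem mainTheorem6 (disp : Order.disp_t) (X : orderType disp) (K : fieldType)
    (charK0 : [pchar K] =i pred0)
    (f : elt X K) (f_valid : all (fun p => mon_valid p.2) f) :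
  in_SGD f <-> (forall m : mon X, coef f m != 0 -> wt m = -1).
Proof.
split; last exact: SGD_of_weightN1.
by move=> /SGD_homogeneous f_wt m; apply: contraNeq => /f_wt ->.
Qed.
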